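(* Consider REShare with parameter $\varepsilon^*>0$ run on a request sequence in which every request has infinite duration, so that the execution is divided into consecutive intervals $h=1,2,\ldots$, interval $h$ using parameter $\varepsilon_h=\varepsilon^*/2^{h-1}$ and handling the subsequence $\sigma_h$ of requests arriving in it. Then for every $k=1,2,\ldots$, $$\sum_{h=1}^k\phi(\mathrm{REShare},\sigma_h)\le(2+4\varepsilon_k)\sum_{h=1}^k\tilde\phi(\mathrm{SHA}(\varepsilon_h),\sigma_h).$$
   Context: Network: a layered graph of finitely many nodes (datacenters), $n$ in total; a node is at layer $\ell\ge0$ if its distance from the closest leaf is $\ell$. Every node can host arbitrarily many virtual machines (VMs). Each VM $b$ runs exactly one VNF $v$ from a finite set $\mathcal V$, has maximum computing capability $\bar\mu>0$ and allocated capability $\mu_b\le\bar\mu$. VNF $v$ has complexity $\theta_v\in(0,1]$. Requests: requests $r$ arrive online with a set $\mathcal V_r\subseteq\mathcal V$ of VNFs, duration $\tau_r$, load $\lambda_r\ge\lambda_{\min}=\inf_r\lambda_r>0$ ($\lambda_{\min}$ known), delay target $D_r$. For $v\in\mathcal V_r$, $(r,v)$ is a job. For a VM $b$ running $v$, $\Lambda(b)$ is the total load of its jobs; each job on $b$ experiences processing latency $1/(\mu_b-\theta_v\Lambda(b))$. Forwarding latency to layer $\ell$ is $d_\ell$, strictly increasing. The latency of $r$ is the maximum $d_\ell$ over layers hosting its jobs plus the sum of processing latencies. Fair delay allocation: $M_{r,v}=1/(\bar\mu-\theta_v\lambda_r)$; $\ell^*(r)$ is the highest layer $\ell$ with $d_\ell+\sum_{v}M_{r,v}\le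 D_r$; $D_r^v=\frac{M_{r,v}}{\sum_{u\in\mathcal V_r}M_{r,u}}(D_r-d_{\ell^*(r)})$. Feasible deployment of $r$: each job on a VM $b$ running $v$ with $\mu_b\le\bar\mu$ and $1/(\mu_b-\theta_v\Lambda(b))\le D_r^v$, and latency of $r$ at most $D_r$. Cost: a VM at a node of layer $\ell$ hosting at least one job costs $\kappa_f^\ell+\kappa_p^\ell\mu_b$, with $\kappa_f^\ell,\kappa_p^\ell$ strictly decreasing in $\ell$; $\kappa^\ell=\kappa_f^\ell+\kappa_p^\ell\bar\mu$. Latency ranges for $\varepsilon>0$: $L_0=[\frac{1}{\bar\mu-\lambda_{\min}},\frac{1}{\bar\mu-\lambda_{\min}(1+\varepsilon)}]$, $L_j=(\frac{1}{\bar\mu-\lambda_{\min}(1+\varepsilon)^j},\frac{1}{\bar\mu-\lambda_{\min}(1+\varepsilon)^{j+1}}]$, $j\ge1$; job $(r,v)$ is associated with $L_j$ if $D_r^v\in L_j$. c-REShare$(\varepsilon)$: on arrival of $r$, choose a node $i^*$ at layer $\ell^*(r)$; for each $v\in\mathcal V_r$ with $D_r^v\in L_j$, a VM in $i^*$ running $v$ and hosting jobs of $L_j$ is viable if running it at speed $\bar\mu$ with the added load $\lambda_r$ gives latency $\frac{1}{\bar\mu-\theta_v(\Lambda(b)+\lambda_r)}$ at most the fair delay allocation of $(r,v)$ and of every job already on it; place $(r,v)$ on the viable VM with largest $\Lambda(b)$ (capability set to $\theta_v\Lambda(b)+1/\min_{(r',v)\in b}D^v_{r'}$, including the new job), or on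 a new VM with capability $\theta_v\lambda_r+1/D_r^v$ if none is viable. SHA$(\varepsilon)$: each job associated with $L_j$ is replaced by a top job with the same load and delay constraint $D_j=\frac{1}{\bar\mu-\lambda_{\min}(1+\varepsilon)^{j+1}}$; SHA$(\varepsilon)$ is the minimum-cost placement of top jobs in which each job of $r$ is in a single node at a layer where deploying $r$ is feasible, a job's load may be split fractionally among VMs running $v$ in that node, jobs of different ranges never share a VM, and each top job meets its relaxed constraint. $\tilde\phi(\mathrm{SHA}(\varepsilon),\sigma)$ denotes the total cost of only the full VMs (running at capability $\bar\mu$) used by SHA$(\varepsilon)$ on input $\sigma$. REShare (parameter $\varepsilon^*>0$; $\log$ is natural logarithm): let $Z=[(2n+2)(1+\varepsilon^* )+1]\log(\bar\mu/\lambda_{\min})\,|\mathcal V|\sum_i\kappa^{\ell(i)}$, sum over all nodes $i$, $\ell(i)$ the layer of $i$. Initialize $q=1$, $h(1)=1$, $\varepsilon_1=\varepsilon^*$, $T_1=0$. For each arrival/departure of a request $r$: handle $r$ with c-REShare$(\varepsilon_{h(q)})$, using the latency ranges of $\varepsilon_{h(q)}$ (so jobs handled in different intervals never share VMs), and update a simulated SHA$(\varepsilon_{h(q)})$ run on the subsequence $\sigma_q$ of requests handled in the current interval $q$; let $Y_q^r=\tilde\phi(\mathrm{SHA}(\varepsilon_{h(q)}),\sigma_q^r)$ where $\sigma_q^r$ is $\sigma_q$ up to and including $r$. With $C_q=\frac{Z}{\varepsilon_{h(q)}\log(1+\varepsilon_{h(q)})}$ and $S_q=\frac{1}{\varepsilon_{h(q)}}\sum_{p=1}^{h(q)-1}(2+3\varepsilon_{p})\tilde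 Y_p$: if $Y_q^r\ge\max\{C_q,S_q\}$, set $\varepsilon_{h(q)+1}=\varepsilon_{h(q)}/2$, $T_{h(q)+1}=\Lambda$ (the current total system load), $\tilde Y_{h(q)}=Y_q^r$, $h(q+1)=h(q)+1$, $q\gets q+1$; else if $\Lambda<T_{h(q)}$, set $h(q+1)=h(q)-1$ and $q\gets q+1$. With infinite durations no departures occur, so $h(q)=q$. $\phi(\mathrm{REShare},\sigma_h)$ is the cost of the VMs used by REShare for the requests of interval $h$. *)

From Stdlib Require List.
From HB Require Import structures.
From mathcomp Require Import all_boot all_order all_algebra.
From mathcomp Require Import all_classical all_reals all_analysis.
Set Implicit Arguments. Unset Strict Implicit. Unset Printing Implicit Defensive.
Import Order.TTheory GRing.Theory Num.Theory.
Local Open Scope ring_scope.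

Record net (R : realType) := Net {
  nn     : nat;
  vnf    : finType;
  layer  : 'I_nn -> nat;
  theta  : vnf -> R;            (* complexity theta_v *)
  mubar  : R;                   (* maximum computing capability *)
  lmin   : R;
  dl     : nat -> R;            (* forwarding latency to layer l *)
  kf     : nat -> R;            (* fixed cost kappa_f^l *)
  kp     : nat -> R             (* proportional cost kappa_p^l *)
}.

Arguments nn {R} n.
Arguments vnf {R} n.
Arguments layer {R} n _.
Arguments theta {R} n _.
Arguments mubar {R} n.
Arguments lmin {R} n.
Arguments dl {R} n _.
Arguments kf {R} n _.
Arguments kp {R} n _.

(* A request (infinite duration): VNF set, load, delay target. *)
Record request (R : realType) (V : finType) := Req {
  rV : {set V};
  rload : R;
  rdelay : R
}.

Section Model.
Variables (R : realType) (N : net R).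
Local Notation V := (vnf N).
Local Notation node := ('I_(nn N)).

Definition kappa (l : nat) : R := kf N l + kp N l * mubar N.

Definition Mrv (r : request R V) (v : V) : R :=
  1 / (mubar N - theta N v * rload r).
Definition SM (r : request R V) : R := \sum_(v in rV r) Mrv r v.
Definition feasible_layer (r : request R V) (l : nat) : Prop :=
  dl N l + SM r <= rdelay r.
Definition lstar (r : request R V) : nat :=
  \max_(i : node | (dl N (layer N i) + SM r <= rdelay r)%R) layer N i.
Definition Dv (r : request R V) (v : V) : R :=
  Mrv r v / SM r * (rdelay r - dl N (lstar r)).

Definition lo (eps : R) (j : nat) : R :=
  1 / (mubar N - lmin N * (1 + eps) ^+ j).
Definition inL (eps D : R) (j : nat) : Prop :=
  if j == 0%N then lo eps j <= D <= lo eps j.+1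
  else lo eps j < D <= lo eps j.+1.

(* top-job delay D_j and the corresponding maximal value of theta_v * load
   on a VM of range j running at speed mubar: mubar - 1/D_j *)
Definition capj (eps : R) (j : nat) : R := lmin N * (1 + eps) ^+ j.+1.
Definition Dtop (eps : R) (j : nat) : R := 1 / (mubar N - capj eps j).

(* A VM: interval in which it was created, node, VNF, latency range,
   and its jobs as (load, fair delay allocation) pairs. *)
Record vm := VM {
  vint : nat; vnode : node; vv : V; vrange : nat; vjobs : seq (R * R)
}.

Definition vload (b : vm) : R := \sum_(p <- vjobs b) p.1.
Definition vminD (b : vm) : R :=
  let ds := map snd (vjobs b) in \big[Num.min/head 0 ds]_(x <- ds) x.
Definition vmu (b : vm) : R := theta N (vv b) * vload b + 1 / vminD b.
Definition vcost (b : vm) : R :=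
  kf N (layer N (vnode b)) + kp N (layer N (vnode b)) * vmu b.

Definition viable (b : vm) (lam D : R) : Prop :=
  let L := theta N (vv b) * (vload b + lam) in
  L < mubar N /\ 1 / (mubar N - L) <= D /\
  (forall p, List.In p (vjobs b) -> 1 / (mubar N - L) <= p.2).

Definition cand (q : nat) (i : node) (v : V) (j : nat) (b : vm) : bool :=
  [&& vint b == q, vnode b == i, vv b == v & vrange b == j].

Definition add_job (b : vm) (lam D : R) : vm :=
  VM (vint b) (vnode b) (vv b) (vrange b) (rcons (vjobs b) (lam, D)).

Definition place_job (q : nat) (i : node) (v : V) (j : nat) (lam D : R)
    (vms vms' : seq vm) : Prop :=
  (exists vms1 b vms2,
      vms = vms1 ++ b :: vms2 /\ cand q i v j b /\ viable b lam D /\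
      (forall b', List.In b' vms -> cand q i v j b' -> viable b' lam D ->
         vload b' <= vload b) /\
      vms' = vms1 ++ add_job b lam D :: vms2)
  \/
  ((forall b', List.In b' vms -> cand q i v j b' -> ~ viable b' lam D) /\
   vms' = rcons vms (VM q i v j [:: (lam, D)])).

(* a top job, as seen by SHA: VNF, load, range, and the data determining
   the layers at which deploying its request is feasible *)
Record topjob := TJ { tv : V; tload : R; trange : nat; tSM : R; tdelay : R }.

Fixpoint place_all (eps : R) (q : nat) (i : node) (r : request R V)
    (vs : seq V) (vms vms' : seq vm) (tj : seq topjob) : Prop :=
  match vs with
  | [::] => vms' = vms /\ tj = [::]
  | v :: vs' => exists j vmsm tj',
      inL eps (Dv r v) j /\
      place_job q i v j (rload r) (Dv r v) vms vmsm /\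
      place_all eps q i r vs' vmsm vms' tj' /\
      tj = TJ v (rload r) j (SM r) (rdelay r) :: tj'
  end.

(* Within a group (node, VNF, range) the total load is split fractionally
   in the canonical greedy way: as many full VMs (capability mubar) as
   possible, plus one partial VM for the remainder. *)
Definition sha_feasible (js : seq topjob) (a : seq node) : Prop :=
  size a = size js /\
  (forall p, List.In p (zip a js) ->
     dl N (layer N p.1) + tSM p.2 <= tdelay p.2).

Definition gkeys (js : seq topjob) (a : seq node) : seq (node * V * nat) :=
  undup [seq (p.1, tv p.2, trange p.2) | p <- zip a js].

Definition gload (js : seq topjob) (a : seq node) (g : node * V * nat) : R :=
  \sum_(p <- zip a js | (p.1, tv p.2, trange p.2) == g) tload p.2.

Definition nfull (eps : R) (js : seq topjob) (a : seq node)
    (g : node * V * nat) : int :=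
  Num.floor (theta N g.1.2 * gload js a g / capj eps g.2).

Definition grem (eps : R) (js : seq topjob) (a : seq node)
    (g : node * V * nat) : R :=
  theta N g.1.2 * gload js a g - (nfull eps js a g)%:~R * capj eps g.2.

Definition gfull (eps : R) js a (g : node * V * nat) : R :=
  (nfull eps js a g)%:~R * kappa (layer N g.1.1).

Definition gcost (eps : R) js a (g : node * V * nat) : R :=
  gfull eps js a g +
  (if 0 < grem eps js a g then
     kf N (layer N g.1.1) + kp N (layer N g.1.1) * (grem eps js a g + 1 / Dtop eps g.2)
   else 0).

Definition sha_cost (eps : R) js a : R := \sum_(g <- gkeys js a) gcost eps js a g.
Definition sha_full (eps : R) js a : R := \sum_(g <- gkeys js a) gfull eps js a g.

Definition sha_opt (eps : R) (js : seq topjob) (a : seq node) : Prop :=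
  sha_feasible js a /\
  forall a', sha_feasible js a' -> sha_cost eps js a <= sha_cost eps js a'.

Definition phitilde (eps : R) (js : seq topjob) (Y : R) : Prop :=
  exists a, sha_opt eps js a /\ Y = sha_full eps js a.

(* REShare (infinite durations: no departures, so h(q) = q)            *)
Definition eps_h (es : R) (h : nat) : R := es / 2 ^+ h.-1.

Definition Zc (es : R) : R :=
  (((2 * nn N + 2)%:R * (1 + es) + 1) * ln (mubar N / lmin N)
   * #|V|%:R * \sum_(i : node) kappa (layer N i)).

Definition Cq (es : R) (q : nat) : R :=
  Zc es / (eps_h es q * ln (1 + eps_h es q)).

Definition Sq (es : R) (Ys : seq R) (q : nat) : R :=
  1 / eps_h es q * \sum_(p < q.-1) (2 + 3 * eps_h es p.+1) * nth 0 Ys p.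

(* state: current interval q, closed-interval values Y~_1..Y~_{q-1},
   all VMs (tagged by interval), top jobs of the current interval *)
Record rstate := RS { rq : nat; rY : seq R; rvms : seq vm; rjobs : seq topjob }.

Definition rinit : rstate := RS 1 [::] [::] [::].

Definition step (es : R) (s : rstate) (r : request R V) (s' : rstate) : Prop :=
  let q := rq s in
  let e := eps_h es q in
  exists (i : node) vms' tj Y,
    layer N i = lstar r /\ feasible_layer r (layer N i) /\
    place_all e q i r (enum (rV r)) (rvms s) vms' tj /\
    phitilde e (rjobs s ++ tj) Y /\
    (if Num.max (Cq es q) (Sq es (rY s) q) <= Y
     then s' = RS q.+1 (rcons (rY s) Y) vms' [::]
     else s' = RS q (rY s) vms' (rjobs s ++ tj)).

Fixpoint execs (es : R) (s : rstate) (sigma : seq (request R V)) (s' : rstate)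
    : Prop :=
  match sigma with
  | [::] => s' = s
  | r :: sigma' => exists sm, step es s r sm /\ execs es sm sigma' s'
  end.

Definition phiR (s : rstate) (h : nat) : R :=
  \sum_(b <- rvms s | vint b == h) vcost b.

End Model.

(* In an interval run with parameter e, call a VM of range j small if its load
   is at most half of the threshold lmin (1+e)^j of that range.  A VM that is
   not small costs at most kappa <= 2 (1+e) times its share kappa theta Lambda
   / capj of the full-VM cost of SHA(e), and by the viability rule each group
   (node, VNF, range) has at most one small VM.  SHA hosts every top job no
   higher than layer l*(r), so the shares add up to at most Y plus one VM per
   group; there are at most n |V| ln(mubar/lmin) / ln(1+e) groups, and the
   choice of Z makes their cost at most e C_q / (3 + 2e).  Hence an interval
   closed with value Y >= C_q costs at most (2 + 3e) Y, and the closing rule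
   Y_k >= S_k makes all earlier intervals together cost at most e_k Y_k. *)

From Stdlib Require List.
From HB Require Import structures.
From mathcomp Require Import all_boot all_order all_algebra.
From mathcomp Require Import all_classical all_reals all_analysis.
From mathcomp Require Import ring lra.
Set Implicit Arguments. Unset Strict Implicit. Unset Printing Implicit Defensive.
Import Order.TTheory GRing.Theory Num.Theory.
Local Open Scope ring_scope.

Lemma InP (T : eqType) (s : seq T) x : reflect (List.In x s) (x \in s).
Proof.
elim: s => [|y s IH] /=; first by right.
rewrite inE; apply: (iffP orP) => [[/eqP->|/IH]|[->|/IH]]; by [left | right | left].
Qed.

Lemma In_map_mem (T : Type) (K : eqType) (f : T -> K) s x :
  List.In x s -> f x \in map f s.
Proof. by move=> xs; apply/InP/List.in_map. Qed.

Lemma mem_map_In (T : Type) (K : eqType) (f : T -> K) s y :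
  y \in map f s -> exists2 x, List.In x s & y = f x.
Proof. by move/InP/List.in_map_iff => [x [<- xs]]; exists x. Qed.

Lemma In_rcons (T : Type) (s : seq T) x y :
  List.In y (rcons s x) <-> List.In y s \/ y = x.
Proof. by rewrite -cats1 List.in_app_iff /=; intuition. Qed.

Lemma In_zip2 (S T : Type) (a : seq S) (s : seq T) p :
  List.In p (zip a s) -> List.In p.2 s.
Proof.
elim: a s => [|x a IH] [|y s] //= [<-|ps]; [by left | right; exact: IH].
Qed.

(* Lists of VMs and of top jobs carry no [eqType]: membership in them is
   [List.In]. *)
Section BigIn.
Variables (R : Type) (idx : R) (op : R -> R -> R).

Lemma big_In_cond (T : Type) (s : seq T) (P Q : pred T) (F : T -> R) :
  (forall x, List.In x s -> Q x) ->
  \big[op/idx]_(x <- s | P x) F x = \big[op/idx]_(x <- s | P x && Q x) F x.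
Proof.
elim: s => [|y s IH] sQ; first by rewrite !big_nil.
rewrite !big_cons (sQ y (or_introl erefl)) andbT IH // => x xs.
exact: sQ (or_intror xs).
Qed.

Lemma big_In (T : Type) (s : seq T) (P : pred T) (F : T -> R) :
  \big[op/idx]_(x <- s | P x) F x =
  \big[op/idx]_(x <- s | P x && `[< List.In x s >]) F x.
Proof. by apply: big_In_cond => x /asboolP. Qed.

Lemma eq_big_In (T : Type) (s : seq T) (P : pred T) (F G : T -> R) :
  (forall x, List.In x s -> P x -> F x = G x) ->
  \big[op/idx]_(x <- s | P x) F x = \big[op/idx]_(x <- s | P x) G x.
Proof.
move=> FG; rewrite big_In [RHS]big_In.
by apply: eq_bigr => x /andP[Px /asboolP xs]; exact: FG.
Qed.

Lemma big_In_pred0 (T : Type) (s : seq T) (P : pred T) (F : T -> R) :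
  (forall x, List.In x s -> ~~ P x) -> \big[op/idx]_(x <- s | P x) F x = idx.
Proof.
move=> sP; rewrite big_In big_pred0 // => x.
by apply/negbTE/negP => /andP[Px /asboolP /sP]; rewrite Px.
Qed.

End BigIn.

Lemma count_In_pred0 (T : Type) (s : seq T) (P : pred T) :
  (forall x, List.In x s -> ~~ P x) -> count P s = 0%N.
Proof. by move=> sP; rewrite -sum1_count big_In_pred0. Qed.

Section SumIn.
Variable R : numDomainType.

Lemma ler_sum_In (T : Type) (s : seq T) (P : pred T) (F G : T -> R) :
  (forall x, List.In x s -> P x -> F x <= G x) ->
  \sum_(x <- s | P x) F x <= \sum_(x <- s | P x) G x.
Proof.
move=> FG; rewrite big_In [leRHS]big_In.
by apply: ler_sum => x /andP[Px /asboolP xs]; exact: FG.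
Qed.

Lemma sumr_ge0_In (T : Type) (s : seq T) (P : pred T) (F : T -> R) :
  (forall x, List.In x s -> P x -> 0 <= F x) -> 0 <= \sum_(x <- s | P x) F x.
Proof.
move=> F0; rewrite big_In; apply: sumr_ge0 => x /andP[Px /asboolP xs].
exact: F0.
Qed.

Lemma sum_partition_keys (T : Type) (K : eqType) (s : seq T) (P : pred T)
    (key : T -> K) (ks : seq K) (F : T -> R) :
  uniq ks -> (forall x, List.In x s -> P x -> key x \in ks) ->
  \sum_(x <- s | P x) F x =
  \sum_(k <- ks) \sum_(x <- s | P x && (key x == k)) F x.
Proof.
move=> uks sks; under [RHS]eq_bigr do rewrite big_mkcondr.
rewrite exchange_big /=; apply: eq_big_In => x xs Px.
rewrite -big_mkcond (eq_bigl (pred1 (key x))) => [|k]; last by rewrite /= eq_sym.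
by rewrite -big_filter filter_pred1_uniq ?big_seq1 // sks.
Qed.

Lemma ler_sum_keys_distinct (T : Type) (K : eqType) (s : seq T) (P : pred T)
    (key : T -> K) (ks : seq K) (f : K -> R) :
  (forall k, 0 <= f k) -> uniq ks ->
  (forall x, List.In x s -> P x -> key x \in ks) ->
  (forall k, (count (fun x => P x && (key x == k)) s <= 1)%N) ->
  \sum_(x <- s | P x) f (key x) <= \sum_(k <- ks) f k.
Proof.
move=> f0 uks sks cnt1; rewrite (sum_partition_keys _ uks sks).
apply: ler_sum => k _; rewrite (eq_bigr (fun=> f k)) => [|x /andP[_ /eqP->] //].
rewrite big_const_seq iter_addr_0.
by case: (count _ _) (cnt1 k) => [|[|]] // _; rewrite ?mulr0n.
Qed.

End SumIn.

Lemma ler_floor_mul (R : realType) (k x : R) :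
  0 <= k -> k * x <= (Num.floor x)%:~R * k + k.
Proof.
move=> k0; have := floorD1_gt x; rewrite intrD1 => x_lt.
have : 0 <= k * ((Num.floor x)%:~R + 1 - x) by rewrite mulr_ge0 // subr_ge0 ltW.
lra.
Qed.

Lemma ler_sum_dominated_last (R : realFieldType) (n : nat) (phi c y : nat -> R)
    (e : R) :
  (forall h, (h <= n)%N -> phi h <= c h * y h) ->
  (forall h, (h <= n)%N -> 0 <= y h) -> 0 <= c n + e ->
  \sum_(h < n) c h * y h <= e * y n ->
  \sum_(h < n.+1) phi h <= (c n + e) * \sum_(h < n.+1) y h.
Proof.
move=> phi_le y0 ce0 tail.
apply: (@le_trans _ _ (\sum_(h < n.+1) c h * y h)).
  by apply: ler_sum => h _; apply: phi_le; rewrite -ltnS.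
rewrite !big_ord_recr /= mulrDr.
have : 0 <= (c n + e) * \sum_(h < n) y h.
  by rewrite mulr_ge0 // sumr_ge0 // => h _; apply/y0/ltnW.
lra.
Qed.

Section Reshare.
Variables (R : realType) (N : net R) (es : R).
Local Notation V := (vnf N).
Local Notation node := ('I_(nn N)).
Local Notation mu := (mubar N).
Local Notation lm := (lmin N).
Local Notation th := (theta N).
Local Notation ep := (eps_h es).

Hypotheses (mu_gt0 : 0 < mu) (lm_gt0 : 0 < lm) (theta_gt0 : forall v, 0 < th v)
  (kappa_coef_decr :
     forall l l' : nat, (l < l')%N -> kf N l' < kf N l /\ kp N l' < kp N l)
  (kappa_coef_ge0 : forall l, 0 <= kf N l /\ 0 <= kp N l)
  (es_gt0 : 0 < es).

Lemma eps_h_gt0 q : 0 < ep q.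
Proof. by rewrite divr_gt0 // exprn_gt0. Qed.

Lemma eps_h_le q : ep q <= es.
Proof.
by rewrite ler_pdivrMr ?exprn_gt0 // ler_peMr ?(ltW es_gt0) // exprn_ege1 // ler1n.
Qed.

Lemma kappa_ge0 l : 0 <= kappa N l.
Proof.
by have [kf0 kp0] := kappa_coef_ge0 l; rewrite addr_ge0 // mulr_ge0 // ltW.
Qed.

Lemma kappa_le l l' : (l <= l')%N -> kappa N l' <= kappa N l.
Proof.
rewrite leq_eqVlt => /orP[/eqP-> // | /kappa_coef_decr[kf_lt kp_lt]].
by rewrite /kappa lerD ?ltW // ltr_pM2r.
Qed.


(* [lo N e j = 1 / (mubar - thr e j)] and [capj N e j = thr e j.+1]. *)
Definition thr (e : R) (j : nat) : R := lm * (1 + e) ^+ j.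

Lemma thr_gt0 e j : 0 < e -> 0 < thr e j.
Proof. by move=> e_gt0; rewrite mulr_gt0 // exprn_gt0 // ltr_wpDr // ltW. Qed.

Lemma capj_gt0 e j : 0 < e -> 0 < capj N e j.
Proof. exact: thr_gt0. Qed.

Lemma capjE e j : capj N e j = thr e j * (1 + e).
Proof. by rewrite /capj exprSr mulrA. Qed.

Lemma thr_le_capj e j : 0 < e -> thr e j <= capj N e j.
Proof.
move=> e_gt0; rewrite capjE ler_peMr ?(ltW (thr_gt0 j e_gt0)) //.
by rewrite lerDl ltW.
Qed.

Lemma viable_of_load_le (b : vm N) lam D e j :
  0 < e -> capj N e j < mu ->
  (forall p, List.In p (vjobs b) -> lo N e j <= p.2) -> lo N e j <= D ->
  th (vv b) * (vload b + lam) <= thr e j -> viable b lam D.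
Proof.
move=> e_gt0 cap_lt jobs_ge D_ge load_le.
have thr_lt : thr e j < mu := le_lt_trans (thr_le_capj j e_gt0) cap_lt.
have load_lt : th (vv b) * (vload b + lam) < mu := le_lt_trans load_le thr_lt.
have delay_le : 1 / (mu - th (vv b) * (vload b + lam)) <= lo N e j.
  by rewrite /lo !div1r lef_pV2 ?posrE ?subr_gt0 ?lerD2l ?lerN2.
split; [exact: load_lt | split; first exact: le_trans delay_le D_ge].
by move=> p /jobs_ge; apply: le_trans.
Qed.

Lemma inL_bounds e D j : 0 < D -> inL N e D j -> lo N e j <= D /\ capj N e j < mu.
Proof.
move=> D_gt0 DL; have [lo_le D_le] : lo N e j <= D /\ D <= lo N e j.+1.
  by move: DL; rewrite /inL; case: eqP => _ /andP[lo_D D_le]; split=> //; exact: ltW.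
split=> //; rewrite ltNge; apply/negP => cap_ge.
have : lo N e j.+1 <= 0 by rewrite /lo div1r invr_le0 subr_le0.
by move/(le_trans D_le); rewrite leNgt D_gt0.
Qed.

Lemma Dv_bounds r v :
  feasible_layer r (lstar r) -> (forall u, u \in rV r -> th u * rload r < mu) ->
  v \in rV r -> 0 < Dv r v /\ th v * rload r + 1 / Dv r v <= mu.
Proof.
move=> feas r_ok vr.
have M_gt0 u : u \in rV r -> 0 < Mrv r u.
  by move=> ur; rewrite /Mrv div1r invr_gt0 subr_gt0 r_ok.
have M_le_SM : Mrv r v <= SM r.
  rewrite /SM (bigD1 v) //= lerDl sumr_ge0 // => u /andP[ur _].
  exact: ltW (M_gt0 u ur).
have SM_gt0 : 0 < SM r := lt_le_trans (M_gt0 v vr) M_le_SM.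
have ratio_ge1 : 1 <= (rdelay r - dl N (lstar r)) / SM r.
  by rewrite ler_pdivlMr // mul1r lerBrDl.
have M_le_Dv : Mrv r v <= Dv r v.
  by rewrite /Dv mulrAC -mulrA ler_peMr // ltW // M_gt0.
have Dv_gt0 : 0 < Dv r v := lt_le_trans (M_gt0 v vr) M_le_Dv.
split=> //; rewrite -lerBrDl.
have -> : mu - th v * rload r = 1 / Mrv r v by rewrite /Mrv !div1r invrK.
by rewrite !div1r lef_pV2 ?posrE ?M_gt0.
Qed.

Definition vm_wf (b : vm N) : Prop :=
  [/\ forall p, List.In p (vjobs b) ->
         0 < p.1 /\ lo N (ep (vint b)) (vrange b) <= p.2,
      vmu b <= mu & capj N (ep (vint b)) (vrange b) < mu].

Definition vm_small (b : vm N) : bool :=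
  th (vv b) * vload b <= thr (ep (vint b)) (vrange b) / 2.

Definition vm_kappa (b : vm N) : R := kappa N (layer N (vnode b)).

(* The number of full SHA VMs (capacity [capj]) that the load of [b] fills,
   priced at the layer of [b]. *)
Definition vm_share (b : vm N) : R :=
  vm_kappa b * (th (vv b) * vload b) / capj N (ep (vint b)) (vrange b).

Lemma vload_ge0 b : vm_wf b -> 0 <= vload b.
Proof. by case=> jobs_ok _ _; apply: sumr_ge0_In => p /jobs_ok[/ltW]. Qed.

Lemma vm_share_ge0 b : vm_wf b -> 0 <= vm_share b.
Proof.
move=> b_wf; apply: divr_ge0; last exact/ltW/capj_gt0/eps_h_gt0.
by rewrite mulr_ge0 ?kappa_ge0 // mulr_ge0 ?vload_ge0 // ltW.
Qed.

Lemma vcost_le_kappa b : vmu b <= mu -> vcost b <= vm_kappa b.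
Proof.
move=> mu_le; rewrite /vcost /vm_kappa /kappa lerD2l ler_wpM2l //.
by have [] := kappa_coef_ge0 (layer N (vnode b)).
Qed.

(* [kappa <= 2 kappa x / thr] once [x > thr / 2], and [capj = (1 + e) thr]. *)
Lemma vcost_le_share b : vm_wf b -> ~~ vm_small b ->
  vcost b <= 2 * (1 + ep (vint b)) * vm_share b.
Proof.
move=> b_wf; rewrite /vm_small -ltNge => big_load.
have [_ mu_le _] := b_wf.
apply: le_trans (vcost_le_kappa mu_le) _.
have e_gt0 := eps_h_gt0 (vint b).
have thr_gt0 := thr_gt0 (vrange b) e_gt0.
have k_ge0 := kappa_ge0 (layer N (vnode b)).
rewrite /vm_share capjE /vm_kappa.
set k := kappa N _ in k_ge0 *; set x := th _ * _ in big_load *.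
set t := thr _ _ in thr_gt0 big_load *; set e := ep _ in e_gt0 *.
have -> : 2 * (1 + e) * (k * x / (t * (1 + e))) = 2 * k * x / t.
  by field; rewrite lt0r_neq0 // lt0r_neq0 // ltr_wpDr // ltW.
rewrite ler_pdivlMr //.
have : 0 <= k * (2 * x - t) by rewrite mulr_ge0 // subr_ge0; lra.
lra.
Qed.

Lemma vcost_le b : vm_wf b ->
  vcost b <=
  (if vm_small b then vm_kappa b else 0) + 2 * (1 + ep (vint b)) * vm_share b.
Proof.
move=> b_wf; have [_ mu_le _] := b_wf.
case: ifP => [_ | /negbT/(vcost_le_share b_wf)]; last by rewrite add0r.
rewrite ler_wpDr ?(vcost_le_kappa mu_le) // mulr_ge0 ?vm_share_ge0 //.
by rewrite mulr_ge0 // addr_ge0 // ltW // eps_h_gt0.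
Qed.

Definition vms_wf (q : nat) (vms : seq (vm N)) : Prop :=
  forall b, List.In b vms -> vm_wf b /\ (vint b <= q)%N.

Definition small_unique (vms : seq (vm N)) : Prop :=
  forall q i v j, (count (fun b => cand q i v j b && vm_small b) vms <= 1)%N.

Definition share_grows (q : nat) (vms vms' : seq (vm N)) (d : R) : Prop :=
  (forall h (F : vm N -> R), h != q ->
     \sum_(b <- vms' | vint b == h) F b = \sum_(b <- vms | vint b == h) F b) /\
  \sum_(b <- vms' | vint b == q) vm_share b =
    \sum_(b <- vms | vint b == q) vm_share b + d.

Lemma share_grows_trans q vms1 vms2 vms3 d1 d2 :
  share_grows q vms1 vms2 d1 -> share_grows q vms2 vms3 d2 ->
  share_grows q vms1 vms3 (d1 + d2).
Proof.
move=> [other12 share12] [other23 share23].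
split; last by rewrite share23 share12 addrA.
by move=> h F hq; rewrite other23 // other12.
Qed.

Lemma candP q i v j (b : vm N) :
  cand q i v j b -> [/\ vint b = q, vnode b = i, vv b = v & vrange b = j].
Proof. by case/and4P => /eqP-> /eqP-> /eqP-> /eqP->. Qed.

Lemma vminD_ge (b : vm N) x : vjobs b != [::] ->
  (forall p, List.In p (vjobs b) -> x <= p.2) -> x <= vminD b.
Proof.
move=> jobs_ne jobs_ge; rewrite /vminD big_seq.
have mem_ge y : y \in map snd (vjobs b) -> x <= y.
  by case/mem_map_In => p /jobs_ge x_le ->.
apply: le_bigmin => [|y /mem_ge //].
by case: (vjobs b) jobs_ne mem_ge => [|p s] //= _; apply; rewrite inE eqxx.
Qed.

Lemma vload_add_job (b : vm N) lam D : vload (add_job b lam D) = vload b + lam.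
Proof. by rewrite /vload big_rcons. Qed.

Lemma add_job_wf b lam D : vm_wf b -> viable b lam D -> 0 < lam ->
  lo N (ep (vint b)) (vrange b) <= D -> vm_wf (add_job b lam D).
Proof.
case=> jobs_ok _ cap_lt [load_lt [delay_le jobs_le]] lam_gt0 D_ge; split=> //=.
  by move=> p /In_rcons[/jobs_ok // | ->].
rewrite /vmu /= vload_add_job.
set L := th (vv b) * (vload b + lam) in load_lt delay_le jobs_le *.
have inv_gt0 : 0 < 1 / (mu - L) by rewrite div1r invr_gt0 subr_gt0.
have min_ge : 1 / (mu - L) <= vminD (add_job b lam D).
  apply: vminD_ge => [|p /In_rcons[/jobs_le // | -> //]].
  by rewrite /=; case: (vjobs b).
have : 1 / vminD (add_job b lam D) <= mu - L.
  rewrite ler_pdivrMr ?(lt_le_trans inv_gt0 min_ge) // mulrC.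
  by rewrite -ler_pdivrMr ?subr_gt0.
lra.
Qed.

Lemma add_job_small b lam D : 0 <= lam -> vm_small (add_job b lam D) -> vm_small b.
Proof.
rewrite /vm_small /= vload_add_job => lam_ge0; apply: le_trans.
by rewrite ler_wpM2l ?lerDl // ltW.
Qed.

Lemma vm_share_add_job b lam D :
  vm_share (add_job b lam D) =
  vm_share b + vm_kappa b * (th (vv b) * lam) / capj N (ep (vint b)) (vrange b).
Proof. by rewrite /vm_share /vm_kappa /= vload_add_job; ring. Qed.

Lemma place_existing_inv q i v j lam D vms1 b vms2 :
  cand q i v j b -> viable b lam D ->
  vms_wf q (vms1 ++ b :: vms2) -> small_unique (vms1 ++ b :: vms2) ->
  0 < lam -> lo N (ep q) j <= D ->
  [/\ vms_wf q (vms1 ++ add_job b lam D :: vms2),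
      small_unique (vms1 ++ add_job b lam D :: vms2) &
      share_grows q (vms1 ++ b :: vms2) (vms1 ++ add_job b lam D :: vms2)
        (kappa N (layer N i) * (th v * lam) / capj N (ep q) j)].
Proof.
move=> bc b_viable wf_vms uniq_small lam_gt0 D_ge; case/candP: (bc) => bq bi bv bj.
have [b_wf b_le] : vm_wf b /\ (vint b <= q)%N.
  by apply: wf_vms; rewrite List.in_app_iff; right; left.
split.
- move=> b'; rewrite List.in_app_iff => -[b'1 | [<- | b'2]]; last 2 first.
  + by split=> //; apply: add_job_wf; rewrite ?bq ?bj.
  + by apply: wf_vms; rewrite List.in_app_iff; right; right.
  by apply: wf_vms; rewrite List.in_app_iff; left.
- move=> q' i' v' j'; apply: leq_trans (uniq_small q' i' v' j').
  rewrite !count_cat /= leq_add2l leq_add2r.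
  have -> : cand q' i' v' j' (add_job b lam D) = cand q' i' v' j' b by [].
  case: (cand _ _ _ _ b) => //=; case small_add: (vm_small _) => //.
  by rewrite (add_job_small (ltW lam_gt0) small_add).
- split=> [h F hq | ]; rewrite !big_cat !big_cons /= bq.
    by rewrite eq_sym (negbTE hq).
  by rewrite eqxx vm_share_add_job /vm_kappa bi bv bq bj; ring.
Qed.

(* Opening a VM requires that no VM of its group can take the job; this is
   why at most one VM per group stays below half of its threshold. *)
Lemma not_viable_small q i v j b lam D :
  vm_wf b -> cand q i v j b -> ~ viable b lam D -> vm_small b ->
  lo N (ep q) j <= D -> thr (ep q) j / 2 < th v * lam.
Proof.
move=> [jobs_ok _ cap_lt] /candP[<- _ <- <-] not_viable.
rewrite /vm_small => small D_ge; rewrite ltNge; apply/negP => small_job.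
apply: not_viable; apply: (viable_of_load_le (eps_h_gt0 _) cap_lt) => //.
  by move=> p /jobs_ok[].
by rewrite mulrDr; lra.
Qed.

Lemma place_new_inv q i v j lam D vms :
  (forall b, List.In b vms -> cand q i v j b -> ~ viable b lam D) ->
  vms_wf q vms -> small_unique vms -> 0 < lam -> lo N (ep q) j <= D ->
  th v * lam + 1 / D <= mu -> capj N (ep q) j < mu ->
  [/\ vms_wf q (rcons vms (VM q i v j [:: (lam, D)])),
      small_unique (rcons vms (VM q i v j [:: (lam, D)])) &
      share_grows q vms (rcons vms (VM q i v j [:: (lam, D)]))
        (kappa N (layer N i) * (th v * lam) / capj N (ep q) j)].
Proof.
move=> not_viable wf_vms uniq_small lam_gt0 D_ge fits cap_lt.
set b0 := VM q i v j [:: (lam, D)].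
have load_b0 : vload b0 = lam by rewrite /vload big_seq1.
have b0_wf : vm_wf b0.
  split=> //=; first by move=> p [<- | []].
  by rewrite /vmu load_b0 /vminD /= big_cons big_nil minxx.
split.
- by move=> b /In_rcons[/wf_vms // | ->].
- move=> q' i' v' j'; rewrite -cats1 count_cat /= addn0.
  case b0_small: (cand q' i' v' j' b0 && vm_small b0); last by rewrite addn0.
  case/andP: b0_small => /candP[/= <- <- <- <-] b0_small.
  rewrite count_In_pred0 // => b bs; apply/negP => /andP[bc b_small].
  have [b_wf _] := wf_vms b bs.
  have lam_gt := not_viable_small b_wf bc (not_viable b bs bc) b_small D_ge.
  by move: b0_small; rewrite /vm_small load_b0 /= leNgt lam_gt.
- split=> [h F hq | ]; rewrite big_rcons /=.
    by rewrite eq_sym (negbTE hq) addr0.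
  by rewrite eqxx /vm_share /vm_kappa load_b0.
Qed.

Lemma place_job_inv q i v j lam D vms vms' :
  place_job q i v j lam D vms vms' -> vms_wf q vms -> small_unique vms ->
  0 < lam -> lo N (ep q) j <= D -> th v * lam + 1 / D <= mu ->
  capj N (ep q) j < mu ->
  [/\ vms_wf q vms', small_unique vms' &
      share_grows q vms vms' (kappa N (layer N i) * (th v * lam) / capj N (ep q) j)].
Proof.
case=> [[vms1 [b [vms2 [-> [bc [b_viable [_ ->]]]]]]] | [not_viable ->]].
  by move=> wf_vms uniq_small lam_gt0 D_ge _ _; apply: place_existing_inv.
exact: place_new_inv.
Qed.

(* l*(r) for the request r of [t], recomputed from the data stored in [t]. *)
Definition tj_layer (t : topjob N) : nat :=
  \max_(i : node | dl N (layer N i) + tSM t <= tdelay t) layer N i.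

Definition tj_share (e : R) (t : topjob N) : R :=
  kappa N (tj_layer t) * (th (tv t) * tload t) / capj N e (trange t).

Definition topjob_ok (e : R) (t : topjob N) : Prop :=
  0 < tload t /\ capj N e (trange t) < mu.

Lemma place_all_inv q i r vs vms vms' tj :
  layer N i = lstar r -> feasible_layer r (layer N i) -> lm <= rload r ->
  (forall u, u \in rV r -> th u * rload r < mu) -> all (mem (rV r)) vs ->
  place_all (ep q) q i r vs vms vms' tj -> vms_wf q vms -> small_unique vms ->
  [/\ vms_wf q vms', small_unique vms',
      share_grows q vms vms' (\sum_(t <- tj) tj_share (ep q) t) &
      forall t, List.In t tj -> topjob_ok (ep q) t].
Proof.
move=> li feas lm_le r_ok; elim: vs vms tj => [|v vs IH] vms tj /=.
  move=> _ [-> ->] wf_vms uniq_small.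
  by split=> //; split=> //; rewrite big_nil addr0.
case/andP=> vr vs_r [j [vms1 [tj' [vj [place [place_rest ->]]]]]].
move=> wf_vms uniq_small.
rewrite li in feas; have [Dv_gt0 fits] := Dv_bounds feas r_ok vr.
have [D_ge cap_lt] := inL_bounds Dv_gt0 vj.
have lam_gt0 : 0 < rload r := lt_le_trans lm_gt0 lm_le.
have [wf1 uniq1 grow1] :=
  place_job_inv place wf_vms uniq_small lam_gt0 D_ge fits cap_lt.
have [wf2 uniq2 grow2 ok2] := IH vms1 tj' vs_r place_rest wf1 uniq1.
split=> //; last by move=> t [<- | /ok2].
rewrite big_cons (_ : tj_share _ _ =
  kappa N (layer N i) * (th v * rload r) / capj N (ep q) j); last by rewrite li.
exact: share_grows_trans grow1 grow2.
Qed.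

Definition nranges (e : R) : nat := Num.truncn (ln (mu / lm) / ln (1 + e)).

Lemma ln1D_gt0 (e : R) : 0 < e -> 0 < ln (1 + e).
Proof. by move=> e_gt0; rewrite ln_gt0 // ltrDl. Qed.

Lemma capj_lt_nranges e j : 0 < e -> capj N e j < mu -> (j < nranges e)%N.
Proof.
move=> e_gt0 cap_lt; rewrite /nranges truncn_gt_nat ler_pdivlMr ?ln1D_gt0 //.
rewrite mulr_natl -lnXn ?ltr_wpDr ?ltW // ltr_ln ?posrE ?exprn_gt0 ?ltr_wpDr ?ltW //.
  by rewrite ltr_pdivlMr // mulrC.
by rewrite divr_gt0 // (lt_trans (capj_gt0 j e_gt0)).
Qed.

Lemma nranges_ln_le e : 0 < e -> lm < mu ->
  (nranges e)%:R * ln (1 + e) <= ln (mu / lm).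
Proof.
move=> e_gt0 lm_lt; rewrite -ler_pdivlMr ?ln1D_gt0 // truncn_le.
by rewrite divr_ge0 ?ltW ?ln1D_gt0 // ln_gt0 // ltr_pdivlMr // mul1r.
Qed.

Definition group_box (J : nat) : seq (node * V * nat) :=
  [seq (iv, j) | iv <- [seq (i, v) | i <- enum node, v <- enum V], j <- iota 0 J].

Definition box_cost (J : nat) : R :=
  \sum_(g <- group_box J) kappa N (layer N g.1.1).

Lemma group_box_uniq J : uniq (group_box J).
Proof.
apply: allpairs_uniq => [||[? ?] [? ?] _ _ [-> ->] //]; last exact: iota_uniq.
by apply: allpairs_uniq => [||[? ?] [? ?] _ _ [-> ->] //]; exact: enum_uniq.
Qed.

Lemma mem_group_box i v j J : (j < J)%N -> (i, v, j) \in group_box J.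
Proof.
move=> jJ; apply: allpairs_f; last by rewrite mem_iota.
by apply: allpairs_f; rewrite mem_enum.
Qed.

Lemma box_costE J :
  box_cost J = (#|V| * J)%:R * \sum_(i : node) kappa N (layer N i).
Proof.
rewrite /box_cost !big_allpairs /= -big_enum mulr_sumr; apply: eq_bigr => i _.
under eq_bigr do rewrite big_const_seq count_predT size_iota iter_addr_0.
by rewrite big_const_seq count_predT -cardE iter_addr_0 -mulrnA mulr_natl mulnC.
Qed.

Lemma box_cost_le_Zc e : 0 < e -> e <= es -> lm < mu ->
  (3 + 2 * e) * box_cost (nranges e) <= Zc N es / ln (1 + e).
Proof.
move=> e_gt0 e_le lm_lt; have ln_gt0 := ln1D_gt0 e_gt0.
rewrite box_costE /Zc ler_pdivlMr //.
set S := \sum_(i : node) _; set J : R := (nranges e)%:R; set n : R := (nn N)%:R.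
have S_ge0 : 0 <= S by rewrite sumr_ge0 // => i _; apply: kappa_ge0.
have coef_le : 3 + 2 * e <= (2 * nn N + 2)%:R * (1 + es) + 1.
  rewrite natrD natrM -/n.
  have : 0 <= n * (1 + es) by rewrite mulr_ge0 // addr_ge0 // ltW.
  lra.
have J_le : (3 + 2 * e) * (J * ln (1 + e)) <=
            ((2 * nn N + 2)%:R * (1 + es) + 1) * ln (mu / lm).
  apply: ler_pM => //; first by rewrite addr_ge0 // mulr_ge0 // ltW.
    by rewrite mulr_ge0 // ltW.
  exact: nranges_ln_le.
have := ler_wpM2r (mulr_ge0 (ler0n _ #|V|) S_ge0) J_le.
rewrite natrM; lra.
Qed.

Lemma sha_full_ge0 e (js : seq (topjob N)) a :
  0 < e -> (forall t, List.In t js -> 0 <= tload t) -> 0 <= sha_full e js a.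
Proof.
move=> e_gt0 loads_ge0; rewrite sumr_ge0 // => g _.
rewrite mulr_ge0 ?kappa_ge0 // ler0z floor_ge0 divr_ge0 //; last exact/ltW/capj_gt0.
rewrite mulr_ge0 ?(ltW (theta_gt0 _)) //.
by apply: sumr_ge0_In => p /In_zip2 /loads_ge0.
Qed.

Lemma tj_share_le_sha e js a : 0 < e -> sha_feasible js a ->
  (forall t, List.In t js -> topjob_ok e t) ->
  \sum_(t <- js) tj_share e t <= sha_full e js a + box_cost (nranges e).
Proof.
move=> e_gt0 [size_a feas_a] js_ok.
pose key (p : node * topjob N) := (p.1, tv p.2, trange p.2).
pose share_at (p : node * topjob N) :=
  kappa N (layer N p.1) * (th (tv p.2) * tload p.2) / capj N e (trange p.2).
have js_le : \sum_(t <- js) tj_share e t <= \sum_(p <- zip a js) share_at p.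
  rewrite -[in leLHS](unzip2_zip (s := a) (t := js)) ?size_a // big_map.
  apply: ler_sum_In => p pa _; have [lam_gt0 _] := js_ok _ (In_zip2 pa).
  rewrite /tj_share /share_at ler_wpM2r ?invr_ge0 ?(ltW (capj_gt0 _ e_gt0)) //.
  rewrite ler_wpM2r ?mulr_ge0 ?(ltW (theta_gt0 _)) ?(ltW lam_gt0) //.
  exact/kappa_le/(leq_bigmax_cond (F := layer N))/feas_a.
have group_le g : \sum_(p <- zip a js | key p == g) share_at p <=
                  gfull e js a g + kappa N (layer N g.1.1).
  rewrite (_ : \sum_(p <- _ | _) _ =
    kappa N (layer N g.1.1) * (th g.1.2 * gload js a g / capj N e g.2)).
    exact: ler_floor_mul (kappa_ge0 _).
  rewrite /gload mulr_sumr mulr_suml mulr_sumr.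
  by apply: eq_bigr => p /eqP <- /=; rewrite /share_at -!mulrA.
have box_le :
    \sum_(g <- gkeys js a) kappa N (layer N g.1.1) <= box_cost (nranges e).
  apply: (ler_sum_keys_distinct (key := id)) => [g | | g | g].
  - exact: kappa_ge0.
  - exact: group_box_uniq.
  - move=> /InP; rewrite /gkeys mem_undup => /mem_map_In[p pa ->] _.
    have [_ /(capj_lt_nranges e_gt0)] := js_ok _ (In_zip2 pa).
    exact: mem_group_box.
  - by rewrite (eq_count (a2 := pred1 g)) // count_uniq_mem ?undup_uniq // leq_b1.
apply: le_trans js_le _.
rewrite (sum_partition_keys (key := key) (ks := gkeys js a) _ (undup_uniq _)).
  apply: (@le_trans _ _
    (\sum_(g <- gkeys js a) (gfull e js a g + kappa N (layer N g.1.1)))).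
    by apply: ler_sum => g _; exact: group_le.
  by rewrite big_split lerD2l.
by move=> p pa _; rewrite mem_undup; apply: In_map_mem.
Qed.

Lemma vm_wf_lmin_lt b : vm_wf b -> lm < mu.
Proof.
case=> _ _; apply: le_lt_trans; rewrite /capj ler_peMr ?(ltW lm_gt0) //.
by rewrite exprn_ege1 // lerDl ltW // eps_h_gt0.
Qed.

Lemma small_kappa_le_box q vms : vms_wf q vms -> small_unique vms ->
  \sum_(b <- vms | (vint b == q) && vm_small b) vm_kappa b <=
  box_cost (nranges (ep q)).
Proof.
move=> wf_vms uniq_small.
apply: (ler_sum_keys_distinct (key := fun b => (vnode b, vv b, vrange b))
          (f := fun g => kappa N (layer N g.1.1)))
  => [g | | b bs /andP[/eqP bq _] | [[i v] j]].
- exact: kappa_ge0.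
- exact: group_box_uniq.
- have [[_ _ cap_lt] _] := wf_vms b bs; rewrite bq in cap_lt.
  exact/mem_group_box/(capj_lt_nranges (eps_h_gt0 q)).
- apply: leq_trans (uniq_small q i v j); rewrite leq_eqVlt; apply/orP; left.
  apply/eqP/eq_count => b; rewrite /cand !xpair_eqE /=.
  by case: (vint b == q); case: (vm_small b); case: (vnode b == i);
     case: (vv b == v); case: (vrange b == j).
Qed.

Lemma interval_cost_le q vms js Y :
  vms_wf q vms -> small_unique vms ->
  \sum_(b <- vms | vint b == q) vm_share b = \sum_(t <- js) tj_share (ep q) t ->
  (forall t, List.In t js -> topjob_ok (ep q) t) ->
  phitilde (ep q) js Y -> Cq N es q <= Y ->
  \sum_(b <- vms | vint b == q) vcost b <= (2 + 3 * ep q) * Y /\ 0 <= Y.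
Proof.
move=> wf_vms uniq_small share_js js_ok [a [[feas _] ->]] C_le.
have e_gt0 := eps_h_gt0 q; set e := ep q in e_gt0 C_le share_js js_ok *.
have Y_ge0 : 0 <= sha_full e js a by apply: sha_full_ge0 => // t /js_ok[/ltW].
split=> //; have [lm_lt | mu_le] := ltP lm mu; last first.
  (* no range is usable, so interval q has no VM *)
  have c_ge0 : 0 <= 2 + 3 * e.
    by apply: addr_ge0 => //; apply: mulr_ge0 => //; exact: ltW.
  rewrite big_In_pred0 ?mulr_ge0 // => b bs.
  by apply/negP => _; have [/vm_wf_lmin_lt] := wf_vms b bs; rewrite ltNge mu_le.
have cost_split : \sum_(b <- vms | vint b == q) vcost b <=
    \sum_(b <- vms | (vint b == q) && vm_small b) vm_kappa b +
    2 * (1 + e) * \sum_(b <- vms | vint b == q) vm_share b.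
  rewrite mulr_sumr big_mkcondr -big_split /=; apply: ler_sum_In => b bs /eqP bq.
  by have := vcost_le (wf_vms b bs).1; rewrite bq.
have box_le : (3 + 2 * e) * box_cost (nranges e) <= e * sha_full e js a.
  apply: le_trans (box_cost_le_Zc e_gt0 (eps_h_le q) lm_lt) _.
  rewrite (_ : Zc N es / ln (1 + e) = e * Cq N es q) ?ler_wpM2l ?(ltW e_gt0) //.
  by rewrite /Cq -/e; field; rewrite !lt0r_neq0 ?ln1D_gt0.
have := ler_wpM2l (mulr_ge0 (ler0n _ 2) (addr_ge0 ler01 (ltW e_gt0)))
          (tj_share_le_sha e_gt0 feas js_ok).
have := small_kappa_le_box wf_vms uniq_small.
(* cost <= box + 2 (1 + e) (Y + box) and (3 + 2 e) box <= e Y *)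
rewrite share_js in cost_split; lra.
Qed.

Definition closed_ok (Ys : seq R) : Prop :=
  forall p, (p < size Ys)%N -> 0 <= nth 0 Ys p /\
    \sum_(p' < p) (2 + 3 * ep p'.+1) * nth 0 Ys p' <= ep p.+1 * nth 0 Ys p.

Lemma closed_ok_rcons Ys Y :
  closed_ok Ys -> 0 <= Y -> Sq es Ys (size Ys).+1 <= Y -> closed_ok (rcons Ys Y).
Proof.
move=> Ys_ok Y_ge0 S_le p; rewrite size_rcons ltnS leq_eqVlt nth_rcons.
case/orP=> [/eqP-> | p_lt].
  rewrite ltnn eqxx; split=> //.
  under eq_bigr => p' _ do rewrite nth_rcons ltn_ord.
  by rewrite -ler_pdivrMl ?eps_h_gt0 // -div1r.
rewrite p_lt; under eq_bigr => p' _ do rewrite nth_rcons (ltn_trans (ltn_ord p') p_lt).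
exact: Ys_ok.
Qed.

Definition reshare_inv (s : rstate N) : Prop :=
  [/\ (0 < rq s)%N /\ size (rY s) = (rq s).-1,
      vms_wf (rq s) (rvms s) /\ small_unique (rvms s),
      \sum_(b <- rvms s | vint b == rq s) vm_share b =
        \sum_(t <- rjobs s) tj_share (ep (rq s)) t /\
      (forall t, List.In t (rjobs s) -> topjob_ok (ep (rq s)) t),
      closed_ok (rY s) &
      forall p, (p < size (rY s))%N ->
        phiR s p.+1 <= (2 + 3 * ep p.+1) * nth 0 (rY s) p].

Lemma reshare_inv_init : reshare_inv (rinit N).
Proof. by split=> //=; rewrite !big_nil. Qed.

Lemma step_inv s r s' : reshare_inv s -> lm <= rload r ->
  (forall v, v \in rV r -> th v * rload r < mu) -> step es s r s' -> reshare_inv s'.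
Proof.
case: s => q Ys vms jobs [/= [q_gt0 size_Ys] [wf_vms uniq_small] [share_jobs jobs_ok]].
move=> Ys_ok phi_le lm_le r_ok [i [vms' [tj [Y [li [feas [place [shaY next]]]]]]]] /=.
have vs_r : all (mem (rV r)) (enum (rV r)) by apply/allP => v; rewrite mem_enum.
have [wf' uniq' [other share'] tj_ok] :=
  place_all_inv li feas lm_le r_ok vs_r place wf_vms uniq_small.
have share_all : \sum_(b <- vms' | vint b == q) vm_share b =
                 \sum_(t <- jobs ++ tj) tj_share (ep q) t.
  by rewrite share' share_jobs big_cat.
have all_ok t : List.In t (jobs ++ tj) -> topjob_ok (ep q) t.
  by case/List.in_app_iff => [/jobs_ok | /tj_ok].
have phi_closed p : (p < size Ys)%N ->
    \sum_(b <- vms' | vint b == p.+1) vcost b =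
    \sum_(b <- vms | vint b == p.+1) vcost b.
  move=> p_lt; apply: other; rewrite ltn_eqF //.
  by move: p_lt; rewrite size_Ys -ltnS prednK.
move: next => /=; case: ifP => [max_le | _] ->; last first.
  by split=> //= p p_lt; rewrite /phiR /= phi_closed //; exact: phi_le.
move: max_le; rewrite ge_max => /andP[C_le S_le].
have [cost_q Y_ge0] := interval_cost_le wf' uniq' share_all all_ok shaY C_le.
split=> /=.
- by rewrite size_rcons size_Ys prednK.
- by split=> // b /wf'[b_wf b_le]; split=> //; exact: leqW.
- split=> //; rewrite big_nil big_In_pred0 // => b /wf'[_ b_le].
  by rewrite ltn_eqF // ltnS.
- by apply: closed_ok_rcons; rewrite // size_Ys prednK.
- move=> p; rewrite size_rcons ltnS leq_eqVlt /phiR /= nth_rcons.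
  case/orP=> [/eqP p_eq | p_lt]; last by rewrite p_lt phi_closed //; exact: phi_le.
  by rewrite p_eq ltnn eqxx size_Ys prednK.
Qed.

Lemma execs_inv s sigma sf :
  (forall r, List.In r sigma ->
     lm <= rload r /\ forall v, v \in rV r -> th v * rload r < mu) ->
  reshare_inv s -> execs es s sigma sf -> reshare_inv sf.
Proof.
elim: sigma s => [|r sigma IH] s sigma_ok s_inv /=; first by move->.
case=> s1 [step1 run]; apply: IH run => [r' r'_in |].
  exact: sigma_ok (or_intror r'_in).
by have [lm_le r_ok] := sigma_ok r (or_introl erefl); apply: step_inv step1.
Qed.

End Reshare.

Theorem lemma5 (R : realType) (N : net R) (es : R)
    (sigma : seq (request R (vnf N))) (sf : rstate N) :
  0 < mubar N -> 0 < lmin N ->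
  (forall v, 0 < theta N v <= 1) ->
  (forall l l' : nat, (l < l')%N -> dl N l < dl N l') -> 0 <= dl N 0 ->
  (forall l l' : nat, (l < l')%N -> kf N l' < kf N l /\ kp N l' < kp N l) ->
  (forall l : nat, 0 <= kf N l /\ 0 <= kp N l) ->
  0 < es ->
  (forall r, List.In r sigma ->
     lmin N <= rload r /\ forall v, v \in rV r -> theta N v * rload r < mubar N) ->
  execs es (rinit N) sigma sf ->
  forall k : nat, (1 <= k <= size (rY sf))%N ->
  \sum_(h < k) phiR sf h.+1
    <= (2 + 4 * eps_h es k) * \sum_(h < k) nth 0 (rY sf) h.
Proof.
move=> mu_gt0 lm_gt0 theta_01 _ _ kappa_decr kappa_ge0 es_gt0 sigma_ok run k.
case/andP=> k_gt0 k_le; have theta_gt0 v : 0 < theta N v by case/andP: (theta_01 v).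
have [_ _ _ Ys_ok phi_le] := execs_inv mu_gt0 lm_gt0 theta_gt0 kappa_decr kappa_ge0
  es_gt0 sigma_ok (reshare_inv_init N es) run.
case: k k_gt0 k_le => // n _ n_lt; have e_gt0 := eps_h_gt0 es_gt0 n.+1.
rewrite (_ : 2 + 4 * _ = 2 + 3 * eps_h es n.+1 + eps_h es n.+1); last by ring.
apply: (ler_sum_dominated_last (phi := fun h => phiR sf h.+1)
  (c := fun h => 2 + 3 * eps_h es h.+1) (y := fun h => nth 0 (rY sf) h)).

- by move=> h h_le; exact: phi_le (leq_ltn_trans h_le n_lt).
- by move=> h h_le; exact: (Ys_ok h (leq_ltn_trans h_le n_lt)).1.
- by rewrite !addr_ge0 ?mulr_ge0 ?ltW.
- exact: (Ys_ok n n_lt).2.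
Qed.
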